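(* Let $\mathcal{H}=(Q_0,Q_1,\beta)$ be a directed tensor-labeled hypergraph over $\mathbb{R}$. With the conventions $\delta_{\le-1}(\mathcal{H}):=|V_{\mathrm{macro}}|-c_{\mathrm{macro}}$ and $L_{\le-1}:=0$, for every $k\ge0$, $$\mathrm{rank}(L_{\le k})-\mathrm{rank}(L_{\le k-1})=\delta_{\le k-1}(\mathcal{H})-\delta_{\le k}(\mathcal{H}).$$
   Context: $T(\mathbb{R}^{Q_0})=\bigoplus_{k\ge0}(\mathbb{R}^{Q_0})^{\otimes k}$ with the inner product making the standard tensor basis orthonormal; $\pi_{\le k}$ is the orthogonal projection onto degrees $\le k$. A directed tensor-labeled hypergraph is $\mathcal{H}=(Q_0,Q_1,\beta)$ ($Q_0,Q_1$ finite) with $\beta:\mathbb{R}^{Q_1}\to T\times T$ linear, $\beta(\mathbf{1}_e)=(A_e,B_e)$; $\partial_\beta:\mathbf{1}_e\mapsto B_e-A_e$; $L_{\le k}:=(\pi_{\le k}\partial_\beta)^*(\pi_{\le k}\partial_\beta)$ (adjoint with respect to the standard inner products). $V_{\mathrm{macro}}=\{A_e\}\cup\{B_e\}$; macrograph on $V_{\mathrm{macro}}$ with edges $Q_1$, $e:A_e\to B_e$, $c_{\mathrm{macro}}$ its number of weakly connected components; $B_{\mathrm{macro}}:\mathbf{1}_e\mapsto\mathbf{1}_{B_e}-\mathbf{1}_{A_e}$; $\hat\phi:\mathbf{1}_w\mapsto w$; $\delta_{\le k}(\mathcal{H})=\dim(\mathrm{Im}B_{\mathrm{macro}}\cap\mathrm{Ker}(\pi_{\le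 k}\circ\hat\phi))$ for $k\ge0$. *)

From HB Require Import structures.
From mathcomp Require Import all_boot all_order all_algebra.
From mathcomp Require Import finmap.
From mathcomp Require Import reals.
Set Implicit Arguments. Unset Strict Implicit. Unset Printing Implicit Defensive.
Import Order.TTheory GRing.Theory Num.Theory.
Local Open Scope ring_scope.
Local Open Scope fset_scope.

(* The tensor algebra T(R^{Q0}) = (+)_k (R^{Q0})^{(x)k}: an element is a
   finitely supported function on words over Q0 (the standard basis of
   (R^{Q0})^{(x)k} is indexed by the words of length k). *)
Notation tensor Q0 R := {fsfun seq Q0 -> R with 0%R}.

Section Hypergraph.
Variables (R : realType) (Q0 Q1 : finType).
(* beta(1_e) = (A e, B e) *)
Variables (A B : Q1 -> tensor Q0 R).

Definition hg_words : seq (seq Q0) :=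
  enum_fset (\big[fsetU/fset0]_(e : Q1) (finsupp (A e) `|` finsupp (B e))).

Definition hg_bd (e : Q1) (w : seq Q0) : R := B e w - A e w.

(* <pi_{<=k} x, pi_{<=k} y> for x, y supported in hg_words (the standard
   inner product; words outside hg_words contribute 0). *)
Definition hg_ip (k : nat) (x y : seq Q0 -> R) : R :=
  \sum_(w <- hg_words | (size w <= k)%N) x w * y w.

(* L_{<=k} = (pi_{<=k} d)^* (pi_{<=k} d), as a matrix on R^{Q1}
   (Q1 indexed through enum_val): entries <pi d 1_e, pi d 1_f>. *)
Definition hg_L (k : nat) : 'M[R]_#|Q1| :=
  \matrix_(i, j) hg_ip k (hg_bd (enum_val i)) (hg_bd (enum_val j)).

(* rank L_{<=k-1}, with L_{<=-1} := 0; argument k stands for index k-1 *)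
Definition hg_rankL_prev (k : nat) : nat :=
  if k is k'.+1 then \rank (hg_L k') else 0%N.

(* V_macro = {A_e} u {B_e} (as a set of tensors), enumerated without repetition *)
Definition hg_V : seq (tensor Q0 R) :=
  undup ([seq A e | e <- enum Q1] ++ [seq B e | e <- enum Q1]).

Definition hg_nV : nat := size hg_V.

Definition hg_idx (t : tensor Q0 R) : nat := index t hg_V.

(* B_macro : R^{Q1} -> R^{V_macro}, 1_e |-> 1_{B_e} - 1_{A_e}, as a matrix
   acting on row vectors (so its image is its row space). *)
Definition hg_Bmacro : 'M[R]_(#|Q1|, hg_nV) :=
  \matrix_(i, j) ((((j : nat) == hg_idx (B (enum_val i))) : nat)%:R
                  - (((j : nat) == hg_idx (A (enum_val i))) : nat)%:R).

(* pi_{<=k} o phi_hat : R^{V_macro} -> T, 1_w |-> pi_{<=k} w, in coordinates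
   on the words (only words of hg_words can be nonzero). *)
Definition hg_Phi (k : nat) : 'M[R]_(hg_nV, size hg_words) :=
  \matrix_(i, j) (let w := nth [::] hg_words j in
                  if (size w <= k)%N then (nth [fsfun] hg_V i) w else 0).

Definition hg_delta (k : nat) : nat :=
  \rank (hg_Bmacro :&: kermx (hg_Phi k))%MS.

(* macrograph: edge e : A_e -> B_e; weak connectivity = connectivity of the
   symmetrized adjacency relation *)
Definition hg_macro_rel : rel 'I_hg_nV :=
  fun i j => [exists e : Q1,
     ((hg_idx (A e) == i :> nat) && (hg_idx (B e) == j :> nat))
  || ((hg_idx (B e) == i :> nat) && (hg_idx (A e) == j :> nat))].

Definition hg_cmacro : nat := n_comp hg_macro_rel 'I_hg_nV.

(* delta_{<=k-1}, with delta_{<=-1} := |V_macro| - c_macro *)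
Definition hg_delta_prev (k : nat) : nat :=
  if k is k'.+1 then hg_delta k' else (hg_nV - hg_cmacro)%N.

End Hypergraph.

From HB Require Import structures.
From mathcomp Require Import all_boot all_order all_algebra.
From mathcomp Require Import finmap.
From mathcomp Require Import reals.
From mathcomp Require Import zify.
Set Implicit Arguments. Unset Strict Implicit. Unset Printing Implicit Defensive.
Import Order.TTheory GRing.Theory Num.Theory.
Local Open Scope ring_scope.

(* Writing D_k for the matrix of pi_{<=k} o d_beta = (pi_{<=k} o phi_hat) o B_macro,
   we have L_{<=k} = D_k D_k^T, so rank L_{<=k} = rank D_k, and rank-nullity for
   pi_{<=k} o phi_hat restricted to Im B_macro gives rank D_k = rank B_macro - delta_{<=k}.
   As B_macro is the incidence matrix of the macrograph, its rank is |V_macro| - c_macro.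
   Hence rank L_{<=k} + delta_{<=k} does not depend on k, also for k = -1. *)

Lemma trmx_mul_self_eq0 (R : realDomainType) m n (M : 'M[R]_(m, n)) :
  M *m M^T = 0 -> M = 0.
Proof.
move=> /matrixP MMt0; apply/matrixP => i j; rewrite mxE.
have sumsq0 : \sum_l M i l * M i l = 0.
  by have := MMt0 i i; rewrite !mxE => {2}<-; apply: eq_bigr => l _; rewrite mxE.
have sq_ge0 l : true -> 0 <= M i l * M i l by rewrite -expr2 sqr_ge0.
by apply/eqP; rewrite -[_ == 0]orbb -mulf_eq0 (psumr_eq0P sq_ge0 sumsq0).
Qed.

Lemma mxrank_mul_trmx (R : realFieldType) m n (M : 'M[R]_(m, n)) :
  \rank (M *m M^T) = \rank M.
Proof.
set X := (M :&: kermx M^T)%MS.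
have [Y XYM] : exists Y, X = Y *m M by apply/submxP; exact: capmxSl.
have XMt0 : X *m M^T = 0 by apply/sub_kermxP; exact: capmxSr.
have X0 : X = 0 by apply: trmx_mul_self_eq0; rewrite {2}XYM trmx_mul mulmxA XMt0 mul0mx.
by rewrite -[RHS](mxrank_mul_ker M M^T) -/X X0 mxrank0 addn0.
Qed.

Section IncidenceMatrix.
Variables (F : fieldType) (E : finType) (n : nat) (src tgt : E -> 'I_n).

Definition incidence_mx : 'M[F]_(#|E|, n) :=
  \matrix_(i, v) ((v == tgt (enum_val i))%:R - (v == src (enum_val i))%:R).

Definition incidence_rel : rel 'I_n := fun u v =>
  [exists e, (src e == u) && (tgt e == v) || (tgt e == u) && (src e == v)].

Lemma row_incidence_mx i :
  row i incidence_mx = delta_mx 0 (tgt (enum_val i)) - delta_mx 0 (src (enum_val i)).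
Proof. by apply/rowP => v; rewrite !mxE. Qed.

Lemma incidence_mulmxE p (X : 'M[F]_(n, p)) i j :
  (incidence_mx *m X) i j = X (tgt (enum_val i)) j - X (src (enum_val i)) j.
Proof.
have /rowP/(_ j) : row i (incidence_mx *m X)
                   = row (tgt (enum_val i)) X - row (src (enum_val i)) X.
  by rewrite row_mul row_incidence_mx mulmxBl -!rowE.
by rewrite !mxE.
Qed.

Lemma mulmx_tr_incidenceE p (K : 'M[F]_(p, n)) j i :
  (K *m incidence_mx^T) j i = K j (tgt (enum_val i)) - K j (src (enum_val i)).
Proof.
transitivity ((K *m incidence_mx^T)^T i j); first by rewrite [RHS]mxE.
by rewrite trmx_mul trmxK incidence_mulmxE !mxE.
Qed.

Lemma incidence_rel_sym : symmetric incidence_rel.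
Proof.
move=> u v; apply: eq_existsb => e.
by apply/idP/idP => /orP[]/andP[-> ->]; rewrite ?orbT.
Qed.

Local Notation croot := (fingraph.root incidence_rel).

Lemma croot_tgt e : croot (tgt e) = croot (src e).
Proof.
have csym := sym_connect_sym incidence_rel_sym.
apply/(fingraph.rootP csym)/connect1.
by apply/existsP; exists e; rewrite !eqxx orbT.
Qed.

Lemma ker_tr_incidence_connect p (K : 'M[F]_(p, n)) :
  K *m incidence_mx^T = 0 -> forall j u v, connect incidence_rel u v -> K j u = K j v.
Proof.
move=> /matrixP KM0 j.
have edge e : K j (src e) = K j (tgt e).
  apply/esym/eqP; rewrite -subr_eq0.
  by have := KM0 j (enum_rank e); rewrite mulmx_tr_incidenceE enum_rankK mxE => ->.
move=> u v /connectP[s uv ->] {v}; elim: s u uv => //= w s IH u /andP[uw /IH <-].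
by case/existsP: uw => e /orP[]/andP[/eqP <- /eqP <-]; rewrite edge.
Qed.

Definition comp_roots := [set v | fingraph.roots incidence_rel v].

Definition comp_mx : 'M[F]_(#|comp_roots|, n) :=
  \matrix_(r, v) (croot v == enum_val r)%:R.

Definition root_mx : 'M[F]_(n, #|comp_roots|) :=
  \matrix_(v, r) (v == enum_val r)%:R.

Lemma croot_enum_val (r : 'I_#|comp_roots|) : croot (enum_val r) = enum_val r.
Proof. by have := enum_valP r; rewrite inE => /eqP. Qed.

Lemma comp_root_mx : comp_mx *m root_mx = 1%:M.
Proof.
apply/matrixP => r r'; rewrite !mxE (bigD1 (enum_val r')) //= !mxE eqxx mulr1.
rewrite big1 ?addr0 => [|v /negbTE v_r']; last by rewrite !mxE v_r' mulr0.
by rewrite croot_enum_val (inj_eq enum_val_inj) eq_sym.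
Qed.

Lemma mul_root_mxE p (K : 'M[F]_(p, n)) j r : (K *m root_mx) j r = K j (enum_val r).
Proof.
rewrite mxE (bigD1 (enum_val r)) //= !mxE eqxx mulr1 big1 ?addr0 // => v /negbTE v_r.
by rewrite !mxE v_r mulr0.
Qed.

Lemma root_comp_mxE p (K : 'M[F]_(p, n)) j v :
  (K *m root_mx *m comp_mx) j v = K j (croot v).
Proof.
have v_root : croot v \in comp_roots.
  by rewrite inE; exact: (fingraph.roots_root (sym_connect_sym incidence_rel_sym)).
rewrite mxE (bigD1 (enum_rank_in v_root (croot v))) //=.
rewrite mul_root_mxE !mxE enum_rankK_in // eqxx mulr1 big1 ?addr0 // => r r_v.
rewrite !mxE; case: eqP => [v_r|]; last by rewrite mulr0.
by case/eqP: r_v; apply: enum_val_inj; rewrite enum_rankK_in.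
Qed.

Lemma ker_tr_incidence : (kermx incidence_mx^T == comp_mx)%MS.
Proof.
apply/andP; split; last first.
  apply/sub_kermxP/matrixP => r i; rewrite mulmx_tr_incidenceE !mxE croot_tgt.
  by rewrite subrr.
set K := kermx _; have /ker_tr_incidence_connect K_conn := mulmx_ker incidence_mx^T.
suff -> : K = K *m root_mx *m comp_mx by exact: submxMl.
apply/matrixP => j v; rewrite root_comp_mxE; apply: K_conn.
exact: fingraph.connect_root.
Qed.

Lemma mxrank_comp_mx : \rank comp_mx = #|comp_roots|.
Proof. by apply/eqP/row_freeP; exists root_mx; exact: comp_root_mx. Qed.

Lemma mxrank_incidence : (\rank incidence_mx + n_comp incidence_rel 'I_n)%N = n.
Proof.
have -> : n_comp incidence_rel 'I_n = #|comp_roots|.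
  by apply: eq_card => v; rewrite !inE andbT.
rewrite -mxrank_comp_mx -(eqmx_rank ker_tr_incidence) mxrank_ker mxrank_tr.
by rewrite subnKC // rank_leq_col.
Qed.

End IncidenceMatrix.

Section Hypergraph.
Variables (R : realType) (Q0 Q1 : finType) (A B : Q1 -> {fsfun seq Q0 -> R with 0%R}).

Local Notation V := (hg_V A B).
Local Notation nV := (hg_nV A B).

Lemma hg_idx_lt t : t \in V -> (hg_idx A B t < nV)%N.
Proof. by rewrite index_mem. Qed.

Lemma mem_hg_V_src e : A e \in V.
Proof. by rewrite mem_undup mem_cat map_f ?mem_enum. Qed.

Lemma mem_hg_V_tgt e : B e \in V.
Proof. by rewrite mem_undup mem_cat orbC map_f ?mem_enum. Qed.

Definition hg_src e : 'I_nV := Ordinal (hg_idx_lt (mem_hg_V_src e)).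
Definition hg_tgt e : 'I_nV := Ordinal (hg_idx_lt (mem_hg_V_tgt e)).

Lemma nth_hg_src e : nth [fsfun] V (hg_src e) = A e.
Proof. by rewrite nth_index ?mem_hg_V_src. Qed.

Lemma nth_hg_tgt e : nth [fsfun] V (hg_tgt e) = B e.
Proof. by rewrite nth_index ?mem_hg_V_tgt. Qed.

Lemma hg_Bmacro_incidence : hg_Bmacro A B = incidence_mx R hg_src hg_tgt.
Proof. by apply/matrixP => i v; rewrite !mxE. Qed.

Lemma hg_macro_rel_incidence : @hg_macro_rel R Q0 Q1 A B =2 incidence_rel hg_src hg_tgt.
Proof. by []. Qed.

Lemma hg_rank_Bmacro : (\rank (hg_Bmacro A B) + hg_cmacro A B)%N = nV.
Proof.
rewrite hg_Bmacro_incidence /hg_cmacro.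
by rewrite (eq_n_comp (eq_connect hg_macro_rel_incidence)) mxrank_incidence.
Qed.

Definition hg_trunc_bd_mx k : 'M[R]_(#|Q1|, size (hg_words A B)) :=
  \matrix_(i, j) (let w := nth [::] (hg_words A B) j in
                  if (size w <= k)%N then hg_bd A B (enum_val i) w else 0).

Lemma hg_Bmacro_mul_Phi k : hg_Bmacro A B *m hg_Phi A B k = hg_trunc_bd_mx k.
Proof.
apply/matrixP => i j; rewrite hg_Bmacro_incidence incidence_mulmxE !mxE /=.
by rewrite nth_hg_src nth_hg_tgt; case: ifP; rewrite ?subrr.
Qed.

Lemma hg_L_mul_trmx k : hg_L A B k = hg_trunc_bd_mx k *m (hg_trunc_bd_mx k)^T.
Proof.
apply/matrixP => i j; rewrite !mxE /hg_ip (big_nth [::]) big_mkord big_mkcond.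
by apply: eq_bigr => l _; rewrite !mxE /=; case: ifP; rewrite ?mulr0.
Qed.

Lemma hg_rankL_add_delta k :
  (\rank (hg_L A B k) + hg_delta A B k)%N = (nV - hg_cmacro A B)%N.
Proof.
rewrite hg_L_mul_trmx mxrank_mul_trmx -hg_Bmacro_mul_Phi /hg_delta mxrank_mul_ker.
by rewrite -[in RHS]hg_rank_Bmacro addnK.
Qed.

Lemma hg_rankL_prev_add_delta_prev k :
  (hg_rankL_prev A B k + hg_delta_prev A B k)%N = (nV - hg_cmacro A B)%N.
Proof. by case: k => [|k] /=; [exact: add0n | exact: hg_rankL_add_delta]. Qed.

End Hypergraph.

Theorem corollary6p11 (R : realType) (Q0 Q1 : finType)
    (A B : Q1 -> {fsfun seq Q0 -> R with 0%R}) (k : nat) :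
  ((\rank (hg_L A B k))%:Z - (hg_rankL_prev A B k)%:Z
   = (hg_delta_prev A B k)%:Z - (hg_delta A B k)%:Z)%R.
Proof.
have := hg_rankL_add_delta A B k; have := hg_rankL_prev_add_delta_prev A B k.
lia.
Qed.
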